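(* Let $R:\mathbb R^d\to(0,\infty)$ satisfy $|R(x)-R(y)|\le|x-y|$ for all $x,y$, and let $\rho(x,y)=\inf_\gamma\int_\gamma \frac{|dz|}{R(z)}$, the infimum over all piecewise $C^1$ curves $\gamma$ in $\mathbb R^d$ joining $x$ and $y$. Then for all $x,y\in\mathbb R^d$, $|x-y|\le\frac12R(x)$ implies $\rho(x,y)\le 1$. *)

From HB Require Import structures.
From mathcomp Require Import all_boot all_order all_algebra.
From mathcomp Require Import all_classical all_reals all_analysis.
Set Implicit Arguments. Unset Strict Implicit. Unset Printing Implicit Defensive.
Import Order.TTheory GRing.Theory Num.Theory.
Import numFieldNormedType.Exports.
Local Open Scope classical_set_scope.
Local Open Scope ring_scope.

Definition enorm {R : realType} {d : nat} (x : 'rV[R]_d) : R :=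
  Num.sqrt (\sum_(i < d) (x ord0 i) ^+ 2).

(* A piecewise C^1 curve gamma : [0,1] -> R^d joining x to y, given by a
   partition 0 = t 0 < t 1 < ... < t n = 1 and, for each piece k < n, a
   C^1 function g k : R -> R^d (differentiable everywhere with continuous
   derivative) agreeing with gamma on [t k, t (k+1)]. *)
Definition pw_C1_curve {R : realType} {d : nat} (x y : 'rV[R]_d)
  (gamma : R -> 'rV[R]_d) (n : nat) (t : nat -> R) (g : nat -> R -> 'rV[R]_d)
  : Prop :=
  [/\ t 0%N = 0 /\ t n = 1, (forall k, (k < n)%N -> t k < t k.+1),
      (forall k, (k < n)%N ->
         (forall u, derivable (g k) u 1) /\ continuous (derive1 (g k)) /\
         {in `[t k, t k.+1], g k =1 gamma}),
      gamma 0 = x & gamma 1 = y].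

Definition curve_length {R : realType} {d : nat} (Rf : 'rV[R]_d -> R)
  (n : nat) (t : nat -> R) (g : nat -> R -> 'rV[R]_d) : \bar R :=
  (\sum_(k < n)
     \int[lebesgue_measure]_(u in `[t k, t k.+1])
        (enorm (derive1 (g k) u) / Rf (g k u))%:E)%E.

Definition rho {R : realType} {d : nat} (Rf : 'rV[R]_d -> R) (x y : 'rV[R]_d)
  : \bar R :=
  ereal_inf [set L | exists gamma n t g,
                pw_C1_curve x y gamma n t g /\ L = curve_length Rf n t g].

From HB Require Import structures.
From mathcomp Require Import all_boot all_order all_algebra.
From mathcomp Require Import all_classical all_reals all_analysis.
From mathcomp Require Import lra measurable_realfun.
Import Order.TTheory GRing.Theory Num.Theory.
Import numFieldNormedType.Exports.
Local Open Scope ring_scope.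

(* Take the straight segment z(u) = x + u (y - x), u in [0, 1].  Since R is
   1-Lipschitz, R(z(u)) >= R(x) - |y - x| >= R(x)/2 >= |y - x| along it, so the
   integrand |z'(u)| / R(z(u)) = |y - x| / R(z(u)) is at most 1 on an interval
   of length 1. *)

Lemma klipschitz_continuous (R : realFieldType) (V W : normedModType R)
    (k : R) (f : V -> W) :
  k.-lipschitz f -> continuous f.
Proof.
move=> fk u; apply/cvgrPdist_lt => e e0.
have k1 : 0 < `|k| + 1 by rewrite ltr_wpDl.
have := @near_ball _ _ u _ (divr_gt0 e0 k1).
apply: filterS => v uv.
have fuv : `|f u - f v| <= k * `|u - v| by exact: (fk (u, v)).
apply: (le_lt_trans fuv); apply: (@le_lt_trans _ _ ((`|k| + 1) * `|u - v|)).
  by rewrite ler_wpM2r // (le_trans (ler_norm k)) // lerDl.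
rewrite mulrC -ltr_pdivlMr //.
by rewrite -ball_normE in uv.
Qed.

Section EuclideanNorm.
Context {R : realType} {d : nat}.
Implicit Types (a : R) (v w : 'rV[R]_d).

Lemma enorm_ge0 v : 0 <= enorm v.
Proof. exact: sqrtr_ge0. Qed.

Lemma enormZ a v : enorm (a *: v) = `|a| * enorm v.
Proof.
rewrite /enorm -sqrtr_sqr -sqrtrM ?sqr_ge0 // mulr_sumr.
by congr Num.sqrt; apply: eq_bigr => i _; rewrite mxE exprMn.
Qed.

Lemma enorm_distC v w : enorm (v - w) = enorm (w - v).
Proof. by rewrite -opprB -scaleN1r enormZ normrN1 mul1r. Qed.

End EuclideanNorm.

Section Segment.
Context {R : realType} {d : nat} (x y : 'rV[R]_d).

Definition segment (u : R) : 'rV[R]_d := x + u *: (y - x).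

Lemma is_derive_segment (u : R) : is_derive u 1 segment (y - x).
Proof.
have scale_derive : is_derive u (1 : R) (fun t : R => t *: (y - x)) (y - x).
  apply: DeriveDef; first exact: diff_derivable.
  by rewrite deriveE // diff_val scale1r.
by have := is_deriveD (is_derive_cst x u 1) scale_derive; rewrite add0r.
Qed.

Lemma derive1_segment : derive1 segment = cst (y - x).
Proof.
by apply/funext => u; rewrite derive1E; apply: derive_val; exact: is_derive_segment.
Qed.

Lemma segment_pw_C1 : pw_C1_curve x y segment 1 (fun k => k%:R) (fun=> segment).
Proof.
split => //; first by case.
- move=> k _; split; first by move=> u; case: (is_derive_segment u).
  by rewrite derive1_segment; split => //; exact: cst_continuous.
- by rewrite /segment scale0r addr0.
- by rewrite /segment scale1r addrC subrK.
Qed.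

Lemma enorm_segmentB (u v : R) :
  enorm (segment u - segment v) = `|u - v| * enorm (y - x).
Proof. by rewrite /segment opprD addrACA subrr add0r -scalerBl enormZ. Qed.

End Segment.

Lemma rho_le_curve_length {R : realType} {d : nat} (Rf : 'rV[R]_d -> R)
    {x y : 'rV[R]_d} {gamma n t g} :
  pw_C1_curve x y gamma n t g -> (rho Rf x y <= curve_length Rf n t g)%E.
Proof. by move=> curve; apply: ereal_inf_lbound; exists gamma, n, t, g. Qed.

Section LipschitzAlongSegment.
Context {R : realType} {d : nat} {Rf : 'rV[R]_d -> R}.
Hypothesis Rlip : forall v w, `|Rf v - Rf w| <= enorm (v - w).
Variables x y : 'rV[R]_d.

Lemma comp_segment_lipschitz :
  (enorm (y - x)).-lipschitz (Rf \o segment x y).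
Proof.
by case=> u v _ /=; rewrite mulrC -enorm_segmentB; exact: Rlip.
Qed.

Lemma comp_segment_lower_bound (u : R) : u \in `[0, 1] ->
  Rf x - enorm (y - x) <= Rf (segment x y u).
Proof.
rewrite in_itv /= => /andP[u0 u1].
have := comp_segment_lipschitz (0, u) (conj I I).
rewrite /= {1}/segment scale0r addr0 sub0r normrN (ger0_norm u0) => lip.
have : u * enorm (y - x) <= enorm (y - x) by rewrite ler_piMl // enorm_ge0.
have := ler_norm (Rf x - Rf (segment x y u)); lra.
Qed.

End LipschitzAlongSegment.

Lemma integral_itv_le_bound (R : realType) (a b M : R) (f : R -> R) :
  a <= b -> measurable_fun `[a, b] f -> {in `[a, b], forall u, 0 <= f u <= M} ->
  (\int[lebesgue_measure]_(u in `[a, b]) (f u)%:E <= (M * (b - a))%:E)%E.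
Proof.
move=> ab mf fM.
apply: (@le_trans _ _ (\int[lebesgue_measure]_(u in `[a, b]) (cst M%:E) u)%E).
  apply: ge0_le_integral => //.
  - by move=> u /= /fM /andP[f0 _]; rewrite lee_fin.
  - exact/measurable_EFinP.
  - by move=> u /= /fM /andP[_ fu]; rewrite lee_fin.
have ab_measure : lebesgue_measure `[a, b]%classic = (b - a)%:E :> \bar R.
  rewrite lebesgue_measure_itv /= lte_fin -EFinB.
  by case: ltgtP ab => // -> _; rewrite subrr.
by rewrite integral_cst // EFinM -ab_measure.
Qed.

Theorem lemma1p4 (R : realType) (d : nat) (Rf : 'rV[R]_d -> R)
  (Rpos : forall x, 0 < Rf x)
  (Rlip : forall x y, `|Rf x - Rf y| <= enorm (x - y)) :
  forall x y : 'rV[R]_d, enorm (x - y) <= Rf x / 2 -> (rho Rf x y <= 1%:E)%E.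
Proof.
move=> x y xy_close; rewrite enorm_distC in xy_close.
apply: le_trans (rho_le_curve_length Rf (segment_pw_C1 x y)) _.
rewrite /curve_length big_ord1 derive1_segment /=.
have weight_cont : continuous (Rf \o segment x y).
  exact: klipschitz_continuous (comp_segment_lipschitz Rlip x y).
have -> : 1%:E = (1 * (1%:R - 0%:R))%:E :> \bar R by rewrite subr0 mulr1.
apply: integral_itv_le_bound => //.
- apply: measurable_funTS; apply: continuous_measurable_fun => u.
  apply: (@continuousM _ _ (cst _) (fun u => (Rf (segment x y u))^-1)).
    exact: cst_continuous.
  by apply: continuousV; [exact: lt0r_neq0 | exact: weight_cont].
- move=> u u01; rewrite divr_ge0 ?enorm_ge0 ?(ltW (Rpos _)) //= ler_pdivrMr // mul1r.
  have := comp_segment_lower_bound Rlip x y u u01; lra.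
Qed.
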